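(* Let $E$ be a second countable Stone space and let $\gamma_1,\ldots,\gamma_k$ be pairwise compatible non-peripheral cuts of $E$. Then the graph $\big(L(\gamma_1)\cap\cdots\cap L(\gamma_k)\big)^\perp$ has at most $k+1$ connected components. Moreover, if it has exactly $k+1$ components, then: (1) no $\gamma_i$ is outermost; (2) no pair $\gamma_i,\gamma_j$ ($i\ne j$) is a peripheral pair; (3) for every triple of distinct indices $i,j,l$ such that the adjacency graph $A(\{\gamma_i,\gamma_j,\gamma_l\})$ is a triangle, one may write $\gamma_i=U_i\sqcup V_i$, $\gamma_j=U_j\sqcup V_j$, $\gamma_l=U_l\sqcup V_l$ so that $U_i\cap U_j=U_i\cap U_l=U_j\cap U_l=\varnothing$ and $V_i\cap V_j\cap V_l\ne\varnothing$.
   Context: A Stone space is a compact, Hausdorff, totally disconnected space. A cut of $E$ is an unordered partition of $E$ into two disjoint clopen sets $U,V$, written $U\sqcup V$; it is non-peripheral if each of $U,V$ contains at least two points, and outermost (if non-peripheral) when one side has exactly two points. Two cuts $U\sqcup V$, $U'\sqcup V'$ cross if all four sets $U\cap U'$, $U\cap V'$, $V\cap U'$, $V\cap V'$ are nonempty; otherwise they are compatible. The complex of cuts $\mathscr{C}(E)$ is the simplicial graph whose vertices are the non-peripheral cuts, with edges between distinct compatible cuts. Two distinct non-peripheral cuts form a peripheral pair if they are compatible and one of the four intersections above is a singleton. The link $L(\gamma)$ is the full subgraph of $\mathscr{C}(E)$ on the vertices adjacent to $\gamma$, and $L(\gamma_1)\cap\cdots\cap L(\gamma_k)$ is the full subgraph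 on the vertices adjacent to every $\gamma_i$. For a graph $L$, the opposite graph $L^\perp$ has the same vertices, with an edge between distinct vertices exactly when they are not adjacent in $L$. For a finite collection $\Gamma$ of pairwise compatible non-peripheral cuts, two cuts $\gamma,\gamma'\in\Gamma$ are adjacent if some non-peripheral cut crosses $\gamma$ and $\gamma'$ and no other cut of $\Gamma$; the adjacency graph $A(\Gamma)$ has vertex set $\Gamma$ and edges between adjacent cuts. *)

From HB Require Import structures.
From mathcomp Require Import all_boot all_order.
From mathcomp Require Import classical_sets boolp topology.
Set Implicit Arguments. Unset Strict Implicit. Unset Printing Implicit Defensive.
Local Open Scope classical_set_scope.

(* A cut U ⊔ V of E is represented by one of its sides U (a clopen set);
   the other side is ~` U.  Two representatives give the same (unordered) cut
   iff they are equal or complementary. *)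
Section Cuts.
Context {T : topologicalType}.

Definition Stone_space : Prop :=
  [/\ compact [set: T], hausdorff_space T & totally_disconnected [set: T]].

Definition is_cut (U : set T) : Prop := clopen U.

Definition same_cut (U V : set T) : Prop := U = V \/ U = ~` V.

Definition two_points (A : set T) : Prop :=
  exists x y : T, [/\ x <> y, A x & A y].

Definition nonperipheral (U : set T) : Prop :=
  [/\ is_cut U, two_points U & two_points (~` U)].

Definition outermost (U : set T) : Prop :=
  nonperipheral U /\
  exists x y : T, x <> y /\ (U = [set x; y] \/ ~` U = [set x; y]).

Definition crosses (U V : set T) : Prop :=
  [/\ U `&` V !=set0, U `&` ~` V !=set0, ~` U `&` V !=set0 & ~` U `&` ~` V !=set0].

Definition compatible (U V : set T) : Prop := ~ crosses U V.

(* adjacency in the complex of cuts C(E): distinct compatible non-peripheral cuts *)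
Definition cc_adj (U V : set T) : Prop :=
  [/\ nonperipheral U, nonperipheral V, ~ same_cut U V & compatible U V].

Definition is_singleton (A : set T) : Prop := exists x : T, A = [set x].

Definition peripheral_pair (U V : set T) : Prop :=
  [/\ nonperipheral U, nonperipheral V, ~ same_cut U V, compatible U V &
      [\/ is_singleton (U `&` V), is_singleton (U `&` ~` V),
          is_singleton (~` U `&` V) | is_singleton (~` U `&` ~` V)]].

(* vertices of L(g_1) ∩ ... ∩ L(g_k): cuts adjacent to every g_i *)
Definition link_vertex (k : nat) (g : 'I_k -> set T) (W : set T) : Prop :=
  nonperipheral W /\ forall i, cc_adj (g i) W.

(* edges of the opposite graph (L(g_1) ∩ ... ∩ L(g_k))^⊥ : distinct vertices
   which are not adjacent in L, i.e. (both being non-peripheral) which cross *)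
Definition opp_edge (k : nat) (g : 'I_k -> set T) (U V : set T) : Prop :=
  [/\ link_vertex g U, link_vertex g V, ~ same_cut U V & ~ cc_adj U V].

(* connectivity in the opposite graph, at the level of cuts (representatives
   of the same cut are identified) *)
Inductive opp_conn (k : nat) (g : 'I_k -> set T) : set T -> set T -> Prop :=
  | opp_conn_refl U V : link_vertex g U -> same_cut U V -> opp_conn g U V
  | opp_conn_step U V W : opp_edge g U V -> opp_conn g V W -> opp_conn g U W.

Definition at_most_components (k : nat) (g : 'I_k -> set T) (n : nat) : Prop :=
  forall f : 'I_n.+1 -> set T, (forall a, link_vertex g (f a)) ->
    exists a b : 'I_n.+1, a <> b /\ opp_conn g (f a) (f b).

Definition at_least_components (k : nat) (g : 'I_k -> set T) (n : nat) : Prop :=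
  exists f : 'I_n -> set T, (forall a, link_vertex g (f a)) /\
    forall a b : 'I_n, a <> b -> ~ opp_conn g (f a) (f b).

(* adjacency of cuts in the adjacency graph A(Γ) for Γ = {U, V, W}:
   U and V adjacent iff some non-peripheral cut crosses U and V and not W *)
Definition adj_in_triple (U V W : set T) : Prop :=
  exists X : set T, [/\ nonperipheral X, crosses X U, crosses X V & ~ crosses X W].

Definition is_triangle (U V W : set T) : Prop :=
  [/\ adj_in_triple U V W, adj_in_triple V W U & adj_in_triple U W V].

End Cuts.

From HB Require Import structures.
From mathcomp Require Import all_boot all_order.
From mathcomp Require Import classical_sets boolp topology.
Set Implicit Arguments. Unset Strict Implicit. Unset Printing Implicit Defensive.
Local Open Scope classical_set_scope.

(* Say that a cut G separates two cuts W, W' when a side of W and a side of W'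
   lie on opposite sides of G.  Two vertices W, W' of L = L(g_1) ∩ ... ∩ L(g_k)
   are joined in L^⊥ unless some g_i separates them: crossing vertices are
   adjacent, and if W, W' are compatible and no g_i separates them, then inside
   disjoint sides A of W and B of W' one finds proper clopen parts XA, XB, each a
   maximal side of some g_i contained in A (resp. B), or an arbitrary one if
   there is none (total disconnectedness), and X = XA ∪ XB is a vertex of L
   crossing both.  As the g_i are nested, vertices pairwise separated by k of
   them number at most k + 1 (induct on k, sorting the vertices and the remaining
   cuts by the side of g_1 they lie in).  With k + 1 components every g_i is
   therefore essential: some pair of vertices is separated by g_i alone.  An
   outermost g_i separates nothing, and for a peripheral pair, or a triangle
   whose chosen sides cover E, whatever g_i separates is also separated by
   another g_j. *)

Lemma exists_maximal (I : finType) (P : pred I) (R : I -> I -> Prop) (i0 : I) :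
  (forall i, R i i) -> (forall i j l, R i j -> R j l -> R i l) -> P i0 ->
  exists2 m, P m & forall i, P i -> R m i -> R i m.
Proof.
move=> reflR transR Pi0.
pose below m := [set i | P i & `[< R i m >]].
case: (arg_maxnP (fun m => #|below m|) Pi0) => m Pm maxm.
exists m => // i Pi Rmi; apply: contrapT => nRim.
suff : (#|below m| < #|below i|)%N by rewrite ltnNge; have /= -> := maxm i Pi.
apply/proper_card/properP; split.
- apply/fintype.subsetP => j; rewrite !inE => /andP[-> /asboolP Rjm].
  exact/asboolP/(transR _ _ _ Rjm).
- by exists i; rewrite !inE Pi /=; apply/asboolP.
Qed.

Section Cuts.
Context {T : topologicalType}.
Implicit Types (U V W G X A B C : set T).

Definition side U (b : bool) : set T := if b then U else ~` U.

Definition inside W A := exists b, side W b `<=` A.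

Definition separates G W1 W2 :=
  exists c, inside W1 (side G c) /\ inside W2 (~` side G c).

Lemma sideN U b : side U (~~ b) = ~` side U b.
Proof. by case: b; rewrite /= ?setCK. Qed.

Lemma side_cases U b b' : side U b' = side U b \/ side U b' = ~` side U b.
Proof. by case: b b' => [] []; rewrite /= ?setCK; [left|right|right|left]. Qed.

Lemma same_cut_side U V b c : side U b = side V c -> same_cut U V.
Proof.
by case: b c => [] [] /= E; [left|right|right; rewrite -E setCK|left; apply: setC_inj].
Qed.

Lemma same_cut_sideL U b : same_cut (side U b) U.
Proof. by case: b; [left|right]. Qed.

Lemma insideS W A B : A `<=` B -> inside W A -> inside W B.
Proof. by move=> AB [b Hb]; exists b => x /Hb /AB. Qed.

Lemma crossesC U V : crosses U V = crosses V U.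
Proof. by rewrite /crosses !(setIC U) !(setIC (~` U)) propeqE; split => -[]. Qed.

Lemma crossesNl U V : crosses (~` U) V = crosses U V.
Proof. by rewrite /crosses setCK propeqE; split => -[]. Qed.

Lemma crosses_sidel U V b : crosses (side U b) V = crosses U V.
Proof. by case: b; rewrite /= ?crossesNl. Qed.

Lemma crosses_sider U V b : crosses U (side V b) = crosses U V.
Proof. by rewrite crossesC crosses_sidel crossesC. Qed.

Lemma crosses_sideP U V : crosses U V <-> forall b c, side U b `&` side V c !=set0.
Proof.
split=> [[? ? ? ?] [] []|H] //.
by split; [apply: (H true true)|apply: (H true false)|apply: (H false true)|apply: (H false false)].
Qed.

Lemma compatibleP U V : compatible U V <-> exists b c, side U b `<=` side V c.
Proof.
rewrite /compatible crosses_sideP; split => [|[b [c UV]] H].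
  move=> /existsNP[b /existsNP[c /set0P/negP/negbNE/eqP/disjoints_subset UV]].
  by exists b, (~~ c); rewrite sideN.
by have [x [/UV Vx]] := H b (~~ c); rewrite sideN.
Qed.

Lemma compatibleC U V : compatible U V -> compatible V U.
Proof. by rewrite /compatible crossesC. Qed.

Lemma compatible_sides U V b c : compatible U V ->
  [\/ side U b `<=` side V c, side U b `<=` ~` side V c,
      ~` side U b `<=` side V c | side V c `<=` side U b].
Proof.
move=> /compatibleP[b' [c' UV]].
case: (side_cases U b b') UV => ->; case: (side_cases V c c') => -> UV.
- exact: Or41.
- exact: Or42.
- exact: Or43.
- by apply: Or44; rewrite -setCS.
Qed.

Lemma compatible_inside G W c : compatible G W ->
  inside W (side G c) \/ inside W (~` side G c).
Proof.
move=> /compatibleC/compatibleP[b [c' WG]].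
by case: (side_cases G c c') WG => -> WG; [left|right]; exists b.
Qed.

Lemma inside_setC W A : (forall b, side W b !=set0) ->
  inside W A -> inside W (~` A) -> exists b, side W b = A.
Proof.
move=> W0 [b WA] [b' WAC]; exists b; apply/seteqP; split => //.
case: (side_cases W b b') WAC => -> WAC.
  by have [x /[dup] /WA Ax /WAC] := W0 b.
by rewrite -setCS.
Qed.

Lemma inside_sideC G W c : (forall b, side W b !=set0) -> ~ same_cut G W ->
  inside W (side G c) -> ~ inside W (~` side G c).
Proof.
move=> W0 nGW WG WGC; have [b E] := inside_setC W0 WG WGC.
exact/nGW/(same_cut_side (esym E)).
Qed.

Lemma not_separates_inside G W1 W2 C e :
  (forall b, side W1 b !=set0) -> (forall b, side W2 b !=set0) ->
  ~ same_cut G W1 -> ~ same_cut G W2 ->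
  side G e `<=` ~` C -> inside W1 C -> inside W2 C -> ~ separates G W1 W2.
Proof.
move=> W10 W20 nGW1 nGW2 GC W1C W2C [c [W1G W2G]].
have W1Ge := insideS (subsetCr GC) W1C; have W2Ge := insideS (subsetCr GC) W2C.
case: (side_cases G e c) W1G W2G => ->; rewrite ?setCK => W1G W2G.
- exact: (inside_sideC W10 nGW1 W1G W1Ge).
- exact: (inside_sideC W20 nGW2 W2G W2Ge).
Qed.

Section Counting.
Variables (I J : finType) (g : I -> set T) (f : J -> set T).
Hypothesis f_side0 : forall a b, side (f a) b !=set0.
Hypothesis compatible_gf : forall i a, compatible (g i) (f a).
Hypothesis not_same_cut_gf : forall i a, ~ same_cut (g i) (f a).
Hypothesis compatible_g : forall i j, compatible (g i) (g j).

Definition separated_by (S : {set I}) (A : {set J}) :=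
  {in A &, forall a b, a != b -> exists2 i, i \in S & separates (g i) (f a) (f b)}.

Lemma separated_by_restrict (S R : {set I}) (A B : {set J}) C :
  B \subset A -> {in B, forall a, inside (f a) C} ->
  {in S :\: R, forall i, inside (g i) (~` C)} ->
  separated_by S A -> separated_by R B.
Proof.
move=> /fintype.subsetP BA BC SRC sepS a b Ba Bb ab.
have [i Si sep_i] := sepS a b (BA a Ba) (BA b Bb) ab.
exists i => //; apply: contrapT => /negP Ri.
have [e GC] : inside (g i) (~` C) by apply: SRC; rewrite inE Ri.
exact: (not_separates_inside (f_side0 a) (f_side0 b) (@not_same_cut_gf i a)
          (@not_same_cut_gf i b) GC (BC a Ba) (BC b Bb) sep_i).
Qed.

Lemma card_separated_by (S : {set I}) (A : {set J}) :
  separated_by S A -> (#|A| <= #|S|.+1)%N.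
Proof.
have [n] := ubnP #|S|; elim: n S A => // n IH S A ltSn sepA.
case: (set_0Vmem S) => [S0|[i0 Si0]].
  rewrite S0 cards0; apply/card_le1_eqP => a b Aa Ab; apply: contrapT => /eqP ab.
  by have [i] := sepA b a Ab Aa ab; rewrite S0 inE.
(* A pair on one side of [g i0] can only be separated by the cuts on that side. *)
set G := g i0; pose inG (B : set T) := `[< inside B G >].
pose A1 := A :&: [set a | inG (f a)]; pose S1 := (S :\ i0) :&: [set i | inG (g i)].
pose A2 := A :\: [set a | inG (f a)]; pose S2 := (S :\ i0) :\: [set i | inG (g i)].
have outG (B : set T) : compatible G B -> ~~ inG B -> inside B (~` G).
  by move=> /(compatible_inside true)[BG|//] /negP[]; apply/asboolP.
have le_sub (R : {set I}) : R \subset S :\ i0 -> (#|R| < n)%N.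
  move=> /subset_leq_card RS; apply: leq_ltn_trans RS _.
  by move: ltSn; rewrite (cardsD1 i0 S) Si0 add1n ltnS.
have sep1 : separated_by S1 A1.
  apply: (separated_by_restrict (R := S1) (C := G) (subsetIl _ _) _ _ sepA) => [a|i].
    by rewrite !inE => /andP[_ /asboolP].
  rewrite !inE => /andP[+ Si]; have [-> _|_] := eqVneq i i0; first by exists false.
  by rewrite Si /=; apply/outG/compatible_g.
have sep2 : separated_by S2 A2.
  apply: (separated_by_restrict (R := S2) (C := ~` G) (subsetDl _ _) _ _ sepA) => [a|i].
    by rewrite !inE => /andP[+ _]; apply/outG/compatible_gf.
  rewrite setCK !inE => /andP[+ Si]; have [-> _|_] := eqVneq i i0; first by exists true.
  by rewrite Si /= andbT negbK => /asboolP.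
have := leq_add (IH _ _ (le_sub _ (subsetIl _ _)) sep1) (IH _ _ (le_sub _ (subsetDl _ _)) sep2).
by rewrite cardsID addnS addSn cardsID (cardsD1 i0 S) Si0.
Qed.

End Counting.

Lemma two_points_nonempty A : two_points A -> A !=set0.
Proof. by case=> x [y [_ Ax _]]; exists x. Qed.

Lemma two_points_subset1 A p : two_points A -> ~ A `<=` [set p].
Proof. by move=> [x [y [xy Ax Ay]]] Ap; apply: xy; rewrite (Ap _ Ax) (Ap _ Ay). Qed.

Lemma nonperipheral_side U b : nonperipheral U ->
  [/\ clopen (side U b), two_points (side U b) & two_points (~` side U b)].
Proof. by case: b => -[cU U2 UC2] /=; split; rewrite ?setCK //; apply: clopenC. Qed.

Lemma nonperipheral_side0 U b : nonperipheral U -> side U b !=set0.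
Proof. by case/(nonperipheral_side b) => _ /two_points_nonempty. Qed.

Lemma crosses_not_same_cut U V : crosses U V -> ~ same_cut U V.
Proof. by move=> UV [E|E]; move: UV; rewrite E ?crossesNl => -[_ [x []]]. Qed.

Lemma crosses_same_cut W U V : same_cut U V -> crosses W U = crosses W V.
Proof. by case=> ->; rewrite // -[~` V]/(side V false) crosses_sider. Qed.

Lemma crosses_setU A XA XB : XA `<=` A -> XB `<=` ~` A ->
  XA !=set0 -> A `\` XA !=set0 -> XB !=set0 -> ~` A `\` XB !=set0 ->
  crosses A (XA `|` XB).
Proof.
move=> XAA XBA [a1 XAa1] [a2 [Aa2 nXAa2]] [b1 XBb1] [b2 [nAb2 nXBb2]]; split.
- by exists a1; split; [apply: XAA|left].
- by exists a2; split => // -[//|/XBA].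
- by exists b1; split; [apply: XBA|right].
- by exists b2; split => // -[/XAA|].
Qed.

Lemma crosses_nonperipheral A X : clopen X -> crosses A X -> nonperipheral X.
Proof.
move=> cX [[x [Ax Xx]] [y [Ay nXy]] [z [nAz Xz]] [w [nAw nXw]]].
by split => //; [exists x, z|exists y, w]; split => // E; [apply: nAz|apply: nAw]; rewrite -E.
Qed.

Lemma clopen_split A : totally_disconnected [set: T] -> clopen A -> two_points A ->
  exists2 B, clopen B & [/\ B `<=` A, B !=set0 & A `\` B !=set0].
Proof.
move=> td cA [x [y [xy Ax Ay]]].
have ncA : ~ connected A.
  move=> /(connected_component_max Ax (@subsetT _ A)); rewrite (td x I) => /(_ y Ay) yx.
  exact: xy (esym yx).
apply: contrapT => nB; apply: ncA => B B0 [C oC BAC] [D cD BAD].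
apply: contrapT => BA; apply: nB; exists B.
  by split; [rewrite BAC; apply: openI; case: cA|rewrite BAD; apply: closedI; case: cA].
split => //; first by rewrite BAC => ? [].
apply: contrapT => nAB; apply/BA/seteqP; split; first by rewrite BAC => ? [].
by move=> z Az; apply: contrapT => nBz; apply: nAB; exists z.
Qed.

Lemma compatible_setU_inside G A XA Y : XA `<=` A -> Y `<=` ~` A ->
  (forall e, side G e `<=` A -> side G e `<=` XA \/ side G e `<=` ~` XA) ->
  inside G A -> compatible G (XA `|` Y).
Proof.
move=> XAA YA lamA [e GA]; apply/compatibleP; exists e.
case: (lamA e GA) => GXA; first by exists true => x /GXA; left.
by exists false => x Gx /= [/(GXA x Gx)//|/YA]; apply; apply: GA.
Qed.

Lemma compatible_setU G A B XA XB : A `<=` ~` B -> XA `<=` A -> XB `<=` B ->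
  (forall e, side G e `<=` A -> side G e `<=` XA \/ side G e `<=` ~` XA) ->
  (forall e, side G e `<=` B -> side G e `<=` XB \/ side G e `<=` ~` XB) ->
  inside G A \/ inside G (~` A) -> inside G B \/ inside G (~` B) ->
  ~ (exists c, A `<=` side G c /\ B `<=` ~` side G c) ->
  compatible G (XA `|` XB).
Proof.
move=> AB XAA XBB lamA lamB [GA|[c GA]].
  by move=> *; apply: (compatible_setU_inside XAA _ lamA GA) => x /XBB; apply: subsetCr.
move=> [GB|[d GB]] nsep.
  by rewrite setUC; apply: (compatible_setU_inside XBB _ lamB GB) => x /XAA /AB.
case: (side_cases G c d) GB => -> GB.
  by apply/compatibleP; exists c, false => x Gx [/XAA|/XBB]; [apply: GA|apply: GB].
exfalso; apply: nsep; exists (~~ c); rewrite sideN setCK.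
by split; [apply: subsetCr | rewrite -setCS].
Qed.

Section InnerClopen.
Variables (I : finType) (g : I -> set T).
Hypothesis td : totally_disconnected [set: T].
Hypothesis g_nonperipheral : forall i, nonperipheral (g i).
Hypothesis g_compatible : forall i j, compatible (g i) (g j).

Lemma exists_inner_clopen A : clopen A -> two_points A -> ~` A !=set0 ->
  (forall i b, side (g i) b <> A) ->
  exists2 X, clopen X & [/\ X `<=` A, X !=set0, A `\` X !=set0 &
    forall i b, side (g i) b `<=` A -> side (g i) b `<=` X \/ side (g i) b `<=` ~` X].
Proof.
move=> cA A2 [z nAz] gA.
have [[[i0 b0] A0]|noside] := pselect (exists p : I * bool, side (g p.1) p.2 `<=` A); last first.
  have [X cX [XA X0 AX]] := clopen_split td cA A2; exists X => //; split => // i b iA.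
  by exfalso; apply: noside; exists (i, b).
have [[i e] XA maxX] := exists_maximal
  (P := fun p => `[< side (g p.1) p.2 `<=` A >])
  (R := fun p q => side (g p.1) p.2 `<=` side (g q.1) q.2)
  (fun _ _ => id) (fun _ _ _ pq qr x => qr x \o pq x) (asboolT A0).
move/asboolP: XA => /= XA.
have [cX X2 _] := nonperipheral_side e (g_nonperipheral i).
exists (side (g i) e) => //; split => //.
- exact: two_points_nonempty.
- apply: contrapT => AX0; apply: (gA i e); apply/seteqP; split => // x Ax.
  by apply: contrapT => nXx; apply: AX0; exists x.
- move=> j d jA; case: (compatible_sides d e (@g_compatible j i)) => [|||Xj]; [by left|by right| |].
    by move=> jCX; exfalso; apply: nAz; have [/jA|/jCX/XA] := pselect (side (g j) d z).
  by left; apply: (maxX (j, d)) => //; apply/asboolP.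
Qed.

Lemma exists_crossing_cut W W' : nonperipheral W -> nonperipheral W' ->
  (forall i, compatible (g i) W /\ ~ same_cut (g i) W) ->
  (forall i, compatible (g i) W' /\ ~ same_cut (g i) W') ->
  compatible W W' -> ~ (exists i, separates (g i) W W') ->
  exists X, [/\ nonperipheral X, forall i, compatible (g i) X, crosses W X & crosses W' X].
Proof.
move=> npW npW' gW gW' /compatibleP[a [b WW']] nsep.
set A := side W a; set B := side W' (~~ b).
have AB : A `<=` ~` B by rewrite /B sideN setCK.
have inner U c : nonperipheral U -> (forall i, ~ same_cut (g i) U) ->
    exists2 X, clopen X & [/\ X `<=` side U c, X !=set0, side U c `\` X !=set0 &
      forall i e, side (g i) e `<=` side U c -> side (g i) e `<=` X \/ side (g i) e `<=` ~` X].
  move=> npU gU; have [cUc Uc2 UcC2] := nonperipheral_side c npU.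
  apply: exists_inner_clopen => // [|i e E]; first exact: two_points_nonempty.
  exact/(gU i)/(same_cut_side E).
have [XA cXA [XAA XA0 AXA lamA]] := inner W a npW (fun i => (gW i).2).
have [XB cXB [XBB XB0 BXB lamB]] := inner W' (~~ b) npW' (fun i => (gW' i).2).
have BA : B `<=` ~` A by apply: subsetCr.
have crossA : crosses A (XA `|` XB).
  apply: crosses_setU => //; first by move=> x /XBB /BA.
  by case: BXB => x [Bx nXBx]; exists x; split => //; apply: BA.
have crossB : crosses B (XA `|` XB).
  rewrite setUC; apply: crosses_setU => //; first by move=> x /XAA /AB.
  by case: AXA => x [Ax nXAx]; exists x; split => //; apply: AB.
exists (XA `|` XB); split.
- exact: (crosses_nonperipheral (clopenU cXA cXB) crossA).
- move=> i; apply: (compatible_setU AB XAA XBB (lamA i) (lamB i)).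
  + exact: compatible_inside (compatibleC (gW i).1).
  + exact: compatible_inside (compatibleC (gW' i).1).
  + by move=> [c [AG BG]]; apply: nsep; exists i, c; split; [exists a|exists (~~ b)].
- by rewrite -(crosses_sidel _ _ a).
- by rewrite -(crosses_sidel _ _ (~~ b)).
Qed.

End InnerClopen.

Lemma inside_pair W x y : nonperipheral W -> inside W [set x; y] ->
  exists b, side W b = [set x; y].
Proof.
move=> npW [b Wxy]; exists b; apply/seteqP; split => // z xyz.
apply: contrapT => nWz; have [_ W2 _] := nonperipheral_side b npW.
case: xyz nWz => /= -> nWz; [apply: (two_points_subset1 (p := y) W2)|
  apply: (two_points_subset1 (p := x) W2)] => t Wt;
  have [Et|Et] := Wxy t Wt; by [exact: Et | exfalso; apply: nWz; rewrite -Et].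
Qed.

Lemma outermost_not_separates G W1 W2 : outermost G ->
  nonperipheral W1 -> nonperipheral W2 -> ~ same_cut G W1 -> ~ same_cut G W2 ->
  ~ separates G W1 W2.
Proof.
move=> [_ [x [y [_ Gxy]]]] npW1 npW2 nGW1 nGW2 [c [W1G W2G]].
have [e Exy] : exists e, side G e = [set x; y] by case: Gxy; [exists true|exists false].
have pair_side W : nonperipheral W -> ~ same_cut G W -> ~ inside W [set x; y].
  move=> npW nGW /(inside_pair npW)[b E]; apply: nGW.
  by apply: (same_cut_side (b := e) (c := b)); rewrite E Exy.
case: (side_cases G e c) W1G W2G => ->; rewrite ?setCK Exy => W1G W2G.
- exact: (pair_side _ npW1 nGW1 W1G).
- exact: (pair_side _ npW2 nGW2 W2G).
Qed.

Lemma inside_meet1 W P Q p : nonperipheral W -> P `&` Q = [set p] -> ~` P `<=` Q ->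
  inside W P -> inside W Q -> exists b, side W b = P \/ side W b = ~` Q.
Proof.
move=> npW PQ PQ' [s WP] [t WQ]; exists s.
have inPQ x : P x -> Q x -> x = p by move=> Px Qx; have : (P `&` Q) x by []; rewrite PQ.
case: (side_cases W s t) WQ => -> WQ.
  have [_ W2 _] := nonperipheral_side s npW; exfalso; apply: (two_points_subset1 W2).
  by move=> x Wx; apply: inPQ; [apply: WP|apply: WQ].
have QW := subsetCl WQ.
have [Wp|nWp] := pselect (side W s p); [left|right]; apply/seteqP; split => // x.
- by move=> Px; have [/(inPQ x Px)->|/QW] := pselect (Q x).
- by move=> Wx Qx; apply: nWp; rewrite -(inPQ x (WP x Wx) Qx).
Qed.

Lemma peripheral_pair_separates Gi Gj W1 W2 : peripheral_pair Gi Gj ->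
  cc_adj Gi W1 -> cc_adj Gi W2 -> cc_adj Gj W1 -> cc_adj Gj W2 ->
  separates Gi W1 W2 -> separates Gj W1 W2.
Proof.
move=> [npi npj _ cij sing] [_ np1 ni1 _] [_ np2 ni2 _] [_ _ nj1 cj1] [_ _ nj2 cj2].
have [ci [cj [p PQ]]] : exists ci cj p, side Gi ci `&` side Gj cj = [set p].
  by case: sing => -[p E]; [exists true, true|exists true, false|
    exists false, true|exists false, false]; exists p.
have PQ' : ~` side Gi ci `<=` side Gj cj.
  have [_ P2 _] := nonperipheral_side ci npi; have [_ Q2 _] := nonperipheral_side cj npj.
  have [Pp Qp] : (side Gi ci `&` side Gj cj) p by rewrite PQ.
  have inPQ x : side Gi ci x -> side Gj cj x -> x = p.
    by move=> Px Qx; have : (side Gi ci `&` side Gj cj) x by []; rewrite PQ.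
  case: (compatible_sides ci cj cij) => // PQs; exfalso.
  - by apply: (two_points_subset1 P2) => x Px; apply: inPQ (PQs x Px).
  - exact: PQs p Pp Qp.
  - by apply: (two_points_subset1 Q2) => x Qx; apply: inPQ (PQs x Qx) Qx.
have outQ W : nonperipheral W -> compatible Gj W -> ~ same_cut Gi W -> ~ same_cut Gj W ->
    inside W (side Gi ci) -> inside W (~` side Gj cj).
  move=> npW cW niW njW WP; case: (compatible_inside cj cW) => // WQ; exfalso.
  have [b [E|E]] := inside_meet1 npW PQ PQ' WP WQ.
  - exact/niW/(same_cut_side (esym E)).
  - by apply/njW/(same_cut_side (b := ~~ cj) (c := b)); rewrite sideN E.
move=> [c [W1G W2G]].
case: (side_cases Gi ci c) W1G W2G => ->; rewrite ?setCK => W1G W2G.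
- exists (~~ cj); rewrite sideN setCK; split; first exact: outQ.
  exact: insideS PQ' W2G.
- by exists cj; split; [apply: insideS PQ' W1G|apply: outQ].
Qed.

Lemma inside_pigeonhole W X Y Z : inside W X -> inside W Y -> inside W Z ->
  [\/ inside W (X `&` Y), inside W (X `&` Z) | inside W (Y `&` Z)].
Proof.
have both b A B : side W b `<=` A -> side W b `<=` B -> inside W (A `&` B).
  by move=> WA WB; exists b => x Wx; split; [apply: WA|apply: WB].
move=> [s WX] [t WY] [u WZ]; case: s t u WX WY WZ => [] [] [] WX WY WZ;
by [apply/Or31/(both _ _ _ WX WY)|apply/Or32/(both _ _ _ WX WZ)|apply/Or33/(both _ _ _ WY WZ)].
Qed.

Lemma partition_separates Gi Gj Gl a b c W1 W2 :
  side Gi a `<=` ~` side Gj b -> side Gi a `<=` ~` side Gl c ->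
  (forall x, [\/ side Gi a x, side Gj b x | side Gl c x]) ->
  cc_adj Gi W1 -> cc_adj Gi W2 -> cc_adj Gj W1 -> cc_adj Gj W2 ->
  cc_adj Gl W1 -> cc_adj Gl W2 ->
  separates Gi W1 W2 -> separates Gj W1 W2 \/ separates Gl W1 W2.
Proof.
set A := side Gi a; set B := side Gj b; set C := side Gl c.
move=> AB AC cover adjW1 adjW2 adjjW1 adjjW2 adjlW1 adjlW2.
have in_BC W : cc_adj Gi W -> cc_adj Gj W -> cc_adj Gl W ->
    inside W (~` A) -> inside W B \/ inside W C.
  move=> [_ npW niW _] [_ _ _ cjW] [_ _ _ clW] WA.
  case: (compatible_inside b cjW) => [|WB]; first by left.
  case: (compatible_inside c clW) => [|WC]; first by right.
  case: (inside_pigeonhole WA WB WC) => W'.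
  - by right; apply: insideS W' => x [? ?]; case: (cover x).
  - by left; apply: insideS W' => x [? ?]; case: (cover x).
  have [|d E] := inside_setC (fun d => nonperipheral_side0 d npW) _ WA.
    by apply: insideS W' => x [? ?]; case: (cover x).
  by exfalso; apply/niW/(same_cut_side (b := a) (c := d)); rewrite E.
move=> [e [W1G W2G]].
case: (side_cases Gi a e) W1G W2G => ->; rewrite ?setCK => W1A W2A.
- have [W2B|W2C] := in_BC W2 adjW2 adjjW2 adjlW2 W2A; [left; exists (~~ b)|right; exists (~~ c)];
    rewrite sideN setCK; split => //; by [exact: insideS AB W1A|exact: insideS AC W1A].
- have [W1B|W1C] := in_BC W1 adjW1 adjjW1 adjlW1 W1A; [left; exists b|right; exists c];
    split => //; by [exact: insideS AB W2A|exact: insideS AC W2A].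
Qed.

Lemma crosses_between X P Q R :
  crosses X P -> crosses X R -> P `<=` Q -> Q `<=` R -> crosses X Q.
Proof.
move=> [[x [Xx Px]] _ [y [nXy Py]] _] [_ [z [Xz nRz]] _ [w [nXw nRw]]] PQ QR.
by split; [exists x|exists z|exists y|exists w]; split => //;
  [apply: PQ|move/QR|apply: PQ|move/QR].
Qed.

Lemma triangle_disjoint_sides U V W :
  compatible U V -> compatible U W -> compatible V W -> is_triangle U V W ->
  exists a b c, [/\ side U a `<=` ~` side V b, side U a `<=` ~` side W c &
                    side V b `<=` ~` side W c].
Proof.
move=> cUV cUW cVW [[X1 [_ X1U X1V nX1W]] [X2 [_ X2V X2W nX2U]] [X3 [_ X3U X3W nX3V]]].
have /compatibleP[a [b' UV]] := cUV.
have AB : side U a `<=` ~` side V (~~ b') by rewrite sideN setCK.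
have WnA : ~ inside W (side U a).
  move=> [e WA]; apply: nX2U; rewrite -(crosses_sider _ _ a).
  apply: (crosses_between (P := side W e) (R := ~` side V (~~ b'))) => //.
  - by rewrite crosses_sider.
  - by rewrite -sideN crosses_sider.
have WnB : ~ inside W (side V (~~ b')).
  move=> [e WB]; apply: nX3V; rewrite -(crosses_sider _ _ (~~ b')).
  apply: (crosses_between (P := side W e) (R := ~` side U a)) => //.
  - by rewrite crosses_sider.
  - by rewrite -sideN crosses_sider.
  - exact: subsetCr.
have [//|[c WA]] := compatible_inside a cUW.
have [//|[d WB]] := compatible_inside (~~ b') cVW.
exists a, (~~ b'), c; case: (side_cases W c d) WB => -> WB.
  by split; [|apply: subsetCr|apply: subsetCr].
exfalso; apply: nX1W; rewrite -(crosses_sider _ _ (~~ c)) sideN.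
apply: (crosses_between (P := side U a) (R := ~` side V (~~ b'))) => //.
- by rewrite crosses_sider.
- by rewrite -sideN crosses_sider.
- exact: subsetCr.
Qed.

Section Components.
Variables (k : nat) (g : 'I_k -> set T).
Hypothesis td : totally_disconnected [set: T].
Hypothesis g_nonperipheral : forall i, nonperipheral (g i).
Hypothesis g_compatible : forall i j, compatible (g i) (g j).

Lemma separates_of_not_opp_conn W W' : link_vertex g W -> link_vertex g W' ->
  ~ opp_conn g W W' -> exists i, separates (g i) W W'.
Proof.
move=> lW lW' nWW'; apply: contrapT => nsep; apply: nWW'.
have [sWW'|nsWW'] := pselect (same_cut W W'); first exact: opp_conn_refl.
have edge U V : link_vertex g U -> link_vertex g V -> crosses U V -> opp_edge g U V.
  by move=> lU lV UV; split => //; [apply: crosses_not_same_cut|case=> _ _ _].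
have endW' : opp_conn g W' W' by apply: opp_conn_refl => //; left.
have [WW'|cWW'] := pselect (crosses W W'); first exact: opp_conn_step (edge _ _ lW lW' WW') endW'.
have gW U (lU : link_vertex g U) i : compatible (g i) U /\ ~ same_cut (g i) U.
  by have [_ _ ? ?] := lU.2 i.
have [X [npX gX WX W'X]] := exists_crossing_cut td g_nonperipheral g_compatible
  lW.1 lW'.1 (gW _ lW) (gW _ lW') cWW' nsep.
have lX : link_vertex g X.
  split => // i; split => // giX; have [cW _] := gW _ lW i.
  by apply: cW; rewrite crossesC (crosses_same_cut _ giX).
apply: opp_conn_step (edge _ _ lW lX WX) (opp_conn_step (edge _ _ lX lW' _) endW').
by rewrite crossesC.
Qed.

Lemma card_link_separated n (f : 'I_n -> set T) (S : {set 'I_k}) :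
  (forall a, link_vertex g (f a)) ->
  (forall a b, a != b -> exists2 i, i \in S & separates (g i) (f a) (f b)) ->
  (n <= #|S|.+1)%N.
Proof.
move=> lf sepf; rewrite -(card_ord n) -cardsT.
apply: (card_separated_by (g := g) (f := f)) => [a b|i a|i a|i j|a b _ _] //.
- exact: nonperipheral_side0 (lf a).1.
- by case: (lf a) => _ /(_ i)[].
- by case: (lf a) => _ /(_ i)[].
- exact: sepf.
Qed.

Lemma opp_components_le : at_most_components g k.+1.
Proof.
move=> f lf; apply: contrapT => nconn.
suff : (k.+2 <= #|[set: 'I_k]%SET|.+1)%N by rewrite cardsT card_ord ltnn.
apply: (card_link_separated lf) => a b ab.
have [i sep] : exists i, separates (g i) (f a) (f b).
  apply: (separates_of_not_opp_conn (lf a) (lf b)) => conn.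
  by apply: nconn; exists a, b; split => //; apply/eqP.
by exists i; rewrite ?inE.
Qed.

Lemma essential_cut : at_least_components g k.+1 -> forall i, exists W1 W2,
  [/\ link_vertex g W1, link_vertex g W2, separates (g i) W1 W2 &
      forall j, j != i -> ~ separates (g j) W1 W2].
Proof.
move=> [f [lf nconn]] i; apply: contrapT => ness.
suff : (k.+1 <= #|[set~ i]%SET|.+1)%N.
  by rewrite cardsC1 card_ord prednK ?ltnn //; apply: leq_ltn_trans (ltn_ord i).
apply: (card_link_separated lf) => a b /eqP ab.
have [j sep] := separates_of_not_opp_conn (lf a) (lf b) (nconn a b ab).
have [ji|ji] := eqVneq j i; last by exists j; rewrite ?inE.
apply: contrapT => nother; apply: ness; exists (f a), (f b); split => // [|j' j'i sep'].
  by rewrite -ji.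
by apply: nother; exists j'; rewrite ?inE.
Qed.

End Components.
End Cuts.

Unset Implicit Arguments.
Set Strict Implicit.
Theorem mainTheorem11 (T : topologicalType) (k : nat) (g : 'I_k -> set T) :
  @Stone_space T -> @second_countable T ->
  (forall i, nonperipheral (g i)) ->
  (forall i j, compatible (g i) (g j)) ->
  at_most_components g k.+1 /\
  (at_least_components g k.+1 ->
     [/\ (forall i, ~ outermost (g i)),
         (forall i j, i != j -> ~ peripheral_pair (g i) (g j)) &
         (forall i j l, i != j -> i != l -> j != l ->
            is_triangle (g i) (g j) (g l) ->
            exists Ui Uj Ul : set T,
              [/\ same_cut Ui (g i), same_cut Uj (g j), same_cut Ul (g l),
                  [/\ Ui `&` Uj = set0, Ui `&` Ul = set0 & Uj `&` Ul = set0] &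
                  ~` Ui `&` ~` Uj `&` ~` Ul !=set0])]).
Proof.
move=> [_ _ td] _ g_np g_comp; split; first exact: opp_components_le.
move=> many; have ess := essential_cut td g_np g_comp many; split.
- move=> i oi; have [W1 [W2 [lW1 lW2 sep _]]] := ess i.
  have [[_ np1 n1 _] [_ np2 n2 _]] := (lW1.2 i, lW2.2 i).
  exact: outermost_not_separates oi np1 np2 n1 n2 sep.
- move=> i j ij pp; have [W1 [W2 [lW1 lW2 sep nsep]]] := ess i.
  apply: (nsep j); first by rewrite eq_sym.
  exact: peripheral_pair_separates pp (lW1.2 i) (lW2.2 i) (lW1.2 j) (lW2.2 j) sep.
- move=> i j l ij il jl tri.
  have [a [b [c [ab ac bc]]]] :=
    triangle_disjoint_sides (g_comp i j) (g_comp i l) (g_comp j l) tri.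
  exists (side (g i) a), (side (g j) b), (side (g l) c).
  split; try exact: same_cut_sideL; first by split; apply/disjoints_subset.
  apply: contrapT => ncov; have [W1 [W2 [lW1 lW2 sep nsep]]] := ess i.
  have cover x : [\/ side (g i) a x, side (g j) b x | side (g l) c x].
    apply: contrapT => nx; apply: ncov; exists x.
    by split; [split|] => ?; apply: nx; [apply: Or31|apply: Or32|apply: Or33].
  case: (partition_separates ab ac cover (lW1.2 i) (lW2.2 i) (lW1.2 j) (lW2.2 j)
           (lW1.2 l) (lW2.2 l) sep); apply: nsep; by rewrite eq_sym.
Qed.
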